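(* Let $\{Q_j\}_{j=1}^{d^2}$ be an NQPR in dimension $d$ and let $U$ be a unitary on $\mathbb{C}^d$. Then all entries of the matrix $U^Q_{jk}=\operatorname{tr}(Q_jUQ_kU^\dagger)/d$ are nonnegative if and only if $U$ belongs to the symmetry group of $\{Q_j\}$.
   Context: An NQPR in dimension $d$ is a family $\{Q_j\}_{j=1}^{d^2}$ of Hermitian operators on $\mathbb{C}^d$ with $\operatorname{tr}(Q_j)=1$ and $\operatorname{tr}(Q_jQ_k)=d\,\delta_{jk}$. Its symmetry group is the group of all unitaries $U$ on $\mathbb{C}^d$ such that $\{UQ_jU^\dagger\}_j=\{Q_j\}_j$ as sets. *)

From HB Require Import structures.
From mathcomp Require Import all_boot all_order all_algebra.
From mathcomp Require Import complex.
From mathcomp Require Import reals.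
Set Implicit Arguments. Unset Strict Implicit. Unset Printing Implicit Defensive.
Import Order.TTheory GRing.Theory Num.Theory.
Local Open Scope ring_scope.

Definition adjmx (C : numClosedFieldType) (n : nat) (A : 'M[C]_n) : 'M[C]_n :=
  (map_mx Num.conj A)^T.

Definition hermitian (C : numClosedFieldType) (n : nat) (A : 'M[C]_n) : Prop :=
  adjmx A = A.

Definition unitary (C : numClosedFieldType) (n : nat) (U : 'M[C]_n) : Prop :=
  U *m adjmx U = 1%:M.

Definition NQPR (C : numClosedFieldType) (d : nat) (Q : 'I_(d ^ 2) -> 'M[C]_d) : Prop :=
  (forall j, hermitian (Q j)) /\
  (forall j, \tr (Q j) = 1) /\
  (forall j k, \tr (Q j *m Q k) = if j == k then d%:R else 0).

(* U is in the symmetry group of Q: {U Q_j U^dagger}_j = {Q_j}_j as sets. *)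
Definition in_symmetry_group (C : numClosedFieldType) (d : nat)
  (Q : 'I_(d ^ 2) -> 'M[C]_d) (U : 'M[C]_d) : Prop :=
  unitary U /\
  (forall j, exists k, U *m Q j *m adjmx U = Q k) /\
  (forall k, exists j, U *m Q j *m adjmx U = Q k).

Definition UQ (C : numClosedFieldType) (d : nat)
  (Q : 'I_(d ^ 2) -> 'M[C]_d) (U : 'M[C]_d) : 'M[C]_(d ^ 2) :=
  \matrix_(j, k) (\tr (Q j *m U *m Q k *m adjmx U) / d%:R).

From Pilot Require Import Defs.
From HB Require Import structures.
From mathcomp Require Import all_boot all_order all_algebra.
From mathcomp Require Import complex.
From mathcomp Require Import reals.
Import Order.TTheory GRing.Theory Num.Theory.
Local Open Scope ring_scope.

Set Implicit Arguments. Unset Strict Implicit. Unset Printing Implicit Defensive.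

(* An NQPR is a tight frame: M = sum_j (tr (Q_j M) / d) Q_j for every M.  For a
   unitary U, the k-th column of U^Q therefore lists the coefficients c_j of
   V = U Q_k U^dagger in this frame.  Taking the trace and the trace of V^2 gives
   sum_j c_j = tr Q_k = 1 and sum_j c_j^2 = tr (Q_k^2) / d = 1, so nonnegative
   coefficients must be a unit vector: V is some Q_m.  Since conjugation by U
   preserves tr (Q_j Q_k), the map k |-> m is injective, hence a permutation.
   Conversely, if U permutes the Q_j then U^Q is a permutation matrix. *)

Lemma mxtrace_mulE (R : pzSemiRingType) n (A B : 'M[R]_n) :
  \tr (A *m B) = \sum_a \sum_b A a b * B b a.
Proof. by apply: eq_bigr => a _; rewrite mxE. Qed.

Section Unitary.
Variables (C : numClosedFieldType) (n : nat).
Implicit Types (A B U : 'M[C]_n).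

Lemma hermitian_conj_entry A :
  Defs.hermitian A -> forall a b, Num.conj (A a b) = A b a.
Proof.
by move=> hA a b; have := congr1 (fun M : 'M_n => M b a) hA; rewrite !mxE.
Qed.

Lemma unitary_adjmxK U : Defs.unitary U -> adjmx U *m U = 1%:M.
Proof. exact: mulmx1C. Qed.

Lemma mxtrace_unitary_conj U A :
  Defs.unitary U -> \tr (U *m A *m adjmx U) = \tr A.
Proof. by move=> hU; rewrite mxtrace_mulC mulmxA unitary_adjmxK // mul1mx. Qed.

Lemma mxtrace_mul_unitary_conj U A B : Defs.unitary U ->
  \tr ((U *m A *m adjmx U) *m (U *m B *m adjmx U)) = \tr (A *m B).
Proof.
move=> hU; rewrite -(mxtrace_unitary_conj (A *m B) hU) !mulmxA.
by rewrite -(mulmxA (U *m A) (adjmx U) U) unitary_adjmxK // mulmx1.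
Qed.

End Unitary.

Lemma mulmx_scalarC (F : fieldType) n (A B : 'M[F]_n) (c : F) :
  c != 0 -> A *m B = c%:M -> B *m A = c%:M.
Proof.
move=> c0 AB; have AB1 : A *m (c^-1 *: B) = 1%:M.
  by rewrite -scalemxAr AB scale_scalar_mx mulVf.
by rewrite -[B](scalerKV c0) -scalemxAl (mulmx1C AB1) scale_scalar_mx mulr1.
Qed.

Lemma sum_mxvec_index (V : nmodType) n (F : 'I_(n * n) -> V) :
  \sum_p F p = \sum_a \sum_b F (mxvec_index a b).
Proof.
rewrite (reindex (uncurry (@mxvec_index n n))) /=; last exact: curry_mxvec_bij.
by rewrite pair_big /=; apply: eq_bigr => -[a b].
Qed.

Lemma psumr_sqr_eq1 (R : numDomainType) n (c : 'I_n -> R) :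
  (forall j, 0 <= c j) -> \sum_j c j = 1 -> \sum_j c j ^+ 2 = 1 ->
  exists m, c m = 1 /\ forall j, j != m -> c j = 0.
Proof.
move=> c_ge0 sum1 sumsq1.
have c_le1 j : c j <= 1 by rewrite -sum1 (bigD1 j) //= lerDl sumr_ge0.
have c_bin j : c j * (1 - c j) = 0.
  have : \sum_j c j * (1 - c j) = 0.
    under eq_bigr do rewrite mulrBr mulr1 -expr2.
    by rewrite sumrB sum1 sumsq1 subrr.
  by move/psumr_eq0P; apply => // i _; rewrite mulr_ge0 // subr_ge0.
have [m cm0 | c0] := pickP (fun m => c m != 0); last first.
  move: sum1; rewrite big1 => [/eqP|j _]; first by rewrite eq_sym oner_eq0.
  by apply/eqP; rewrite -[_ == _]negbK c0.
have cm1 : c m = 1.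
  by move/eqP: (c_bin m); rewrite mulf_eq0 (negbTE cm0) subr_eq0 => /eqP.
exists m; split => // j jm; have : \sum_(i | i != m) c i = 0.
  by move: sum1; rewrite (bigD1 m) //= cm1 -[X in _ = X]addr0 => /addrI.
by move/psumr_eq0P; apply => // i _.
Qed.

Lemma ord_sqr_natr_neq0 (R : numDomainType) d (j : 'I_(d ^ 2)) : d%:R != 0 :> R.
Proof. by rewrite pnatr_eq0; apply/eqP => d0; move: j; rewrite d0 => -[]. Qed.

Section NQPRFrame.
Variables (C : numClosedFieldType) (d : nat) (Q : 'I_(d ^ 2) -> 'M[C]_d).
Hypothesis hQ : NQPR Q.

(* The j-th row is the flattened Q_j; the index types 'I_(d ^ 2) and
   'I_(d * d) are convertible, so this matrix is square. *)
Definition nqpr_frame : 'M[C]_(d * d) := \matrix_(j, p) mxvec (Q j) 0 p.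

Lemma mul_nqpr_frame_adj (M : 'M[C]_d) j :
  (mxvec M *m adjmx nqpr_frame) 0 j = \tr (Q j *m M).
Proof.
rewrite mxE sum_mxvec_index mxtrace_mulC mxtrace_mulE.
apply: eq_bigr => a _; apply: eq_bigr => b _.
by rewrite !mxE !mxvecE hermitian_conj_entry //; case: hQ.
Qed.

Lemma nqpr_frame_gram : nqpr_frame *m adjmx nqpr_frame = d%:R%:M.
Proof.
apply/matrixP => j k; have [_ [_ trQQ]] := hQ.
transitivity ((mxvec (Q j) *m adjmx nqpr_frame) 0 k).
  by rewrite !mxE; apply: eq_bigr => p _; rewrite !mxE.
by rewrite mul_nqpr_frame_adj trQQ !mxE eq_sym; case: eqP.
Qed.

Lemma nqpr_expansion (M : 'M[C]_d) : \sum_j (\tr (Q j *m M) / d%:R) *: Q j = M.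
Proof.
have [d0 | d_gt0] := posnP d.
  by apply/matrixP => a; move: (ltn_ord a); rewrite [X in (_ < X)%N]d0.
have dC : (d%:R : C) != 0 by rewrite pnatr_eq0 -lt0n.
have frame_tight := mulmx_scalarC dC nqpr_frame_gram.
apply/matrixP => a b; apply: (mulfI dC).
transitivity ((mxvec M *m adjmx nqpr_frame *m nqpr_frame) 0 (mxvec_index a b)).
  rewrite summxE mulr_sumr [RHS]mxE; apply: eq_bigr => j _.
  by rewrite mul_nqpr_frame_adj !mxE mxvecE mulrA [_ * (_ / _)]mulrC divfK.
by rewrite -(mulmxA (mxvec M)) frame_tight mul_mx_scalar mxE mxvecE.
Qed.

End NQPRFrame.

Section NQPRSymmetry.
Variables (C : numClosedFieldType) (d : nat).
Variables (Q : 'I_(d ^ 2) -> 'M[C]_d) (U : 'M[C]_d).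
Hypotheses (hQ : NQPR Q) (hU : Defs.unitary U).

Lemma UQ_entryE j k : UQ Q U j k = \tr (Q j *m (U *m Q k *m adjmx U)) / d%:R.
Proof. by rewrite mxE !mulmxA. Qed.

Lemma UQ_col_expansion k : \sum_j UQ Q U j k *: Q j = U *m Q k *m adjmx U.
Proof.
by rewrite -[RHS](nqpr_expansion hQ); apply: eq_bigr => j _; rewrite UQ_entryE.
Qed.

Lemma UQ_col_sum k : \sum_j UQ Q U j k = 1.
Proof.
have [_ [trQ _]] := hQ.
rewrite -(trQ k) -(mxtrace_unitary_conj _ hU) -UQ_col_expansion raddf_sum.
by apply: eq_bigr => j _; rewrite /= mxtraceZ trQ mulr1.
Qed.

Lemma UQ_col_sumsq k : \sum_j UQ Q U j k ^+ 2 = 1.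
Proof.
have [_ [_ trQQ]] := hQ; have dC := ord_sqr_natr_neq0 C k.
have trVV : \tr ((U *m Q k *m adjmx U) *m (U *m Q k *m adjmx U)) = d%:R.
  by rewrite mxtrace_mul_unitary_conj // trQQ eqxx.
apply: (mulIf dC); rewrite mul1r -[RHS]trVV.
rewrite -[X in \tr (X *m _)]UQ_col_expansion.
rewrite mulmx_suml raddf_sum mulr_suml; apply: eq_bigr => j _.
by rewrite /= -scalemxAl mxtraceZ -[\tr _](divfK dC) -UQ_entryE mulrA.
Qed.

Lemma UQ_col_ge0_conj k :
  (forall j, 0 <= UQ Q U j k) -> exists m, U *m Q k *m adjmx U = Q m.
Proof.
move=> col_ge0.
have [m [cm1 cj0]] := psumr_sqr_eq1 col_ge0 (UQ_col_sum k) (UQ_col_sumsq k).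
exists m; rewrite -UQ_col_expansion (bigD1 m) //= cm1 scale1r big1 ?addr0 // => j jm.
by rewrite cj0 // scale0r.
Qed.

Lemma UQ_col_ge0_of_conj k m :
  U *m Q k *m adjmx U = Q m -> forall j, 0 <= UQ Q U j k.
Proof.
have [_ [_ trQQ]] := hQ; move=> km j; rewrite UQ_entryE km trQQ.
by case: eqP => _; rewrite ?mul0r ?divr_ge0 ?ler0n.
Qed.

Lemma conj_nqpr_inj (s : 'I_(d ^ 2) -> 'I_(d ^ 2)) :
  (forall k, U *m Q k *m adjmx U = Q (s k)) -> injective s.
Proof.
have [_ [_ trQQ]] := hQ.
move=> hs k l skl; have := mxtrace_mul_unitary_conj (Q k) (Q l) hU.
rewrite !hs skl !trQQ eqxx.
by case: eqP => // _ /eqP; rewrite (negbTE (ord_sqr_natr_neq0 C k)).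
Qed.

End NQPRSymmetry.

Theorem theorem5 (R : realType) (d : nat) (Q : 'I_(d ^ 2) -> 'M[R[i]]_d)
  (U : 'M[R[i]]_d) :
  NQPR Q -> unitary U ->
  ((forall j k, 0 <= UQ Q U j k) <-> in_symmetry_group Q U).
Proof.
move=> hQ hU; split => [UQ_ge0 | [_ [conjQ _]] j k].
  have [s hs] := fin_all_exists (fun k => UQ_col_ge0_conj hQ hU (UQ_ge0^~ k)).
  have [s_inv _ s_invK] := injF_bij (conj_nqpr_inj hQ hU hs).
  split=> //; split=> k; first by exists (s k).
  by exists (s_inv k); rewrite hs s_invK.
have [m km] := conjQ k.
by apply: (UQ_col_ge0_of_conj hQ km).
Qed.
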